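(* Let $\Phi:D_n\to S_n$ be the homomorphism with $\Phi(s_{1'})=s_1$ and $\Phi(s_i)=s_i$ for $1\le i\le n-1$. If $\pi\in D_n$ is written as $\pi = w_{1}^{j_{1}} t_{2}^{i_{2}} w_{2}^{j_{2}} t_{3}^{i_{3}} \cdots w_{n-1}^{j_{n-1}} t_{n}^{i_{n}}$ with $0\le i_k\le k-1$, $0\le j_k\le 1$, then $\Phi(\pi)=t_2^{i_2}\cdot t_3^{i_3}\cdots t_n^{i_n}$, where on the right $t_k=s_1s_2\cdots s_{k-1}\in S_n$.
   Context: $D_n$ ($n\ge 2$) is the Coxeter group with generators $s_{1'},s_1,\dots,s_{n-1}$ and relations $s^2=1$, $(s_i s_{i+1})^3=1$, $(s_is_j)^2=1$ for $|i-j|\ge 2$, $(s_{1'}s_2)^3=1$, $(s_{1'}s_i)^2=1$ for $i\ne 2$. $S_n$ is the symmetric group with Coxeter generators $s_i=(i,i+1)$, $1\le i\le n-1$. In $D_n$, $t_k=s_1s_2\cdots s_{k-1}$ ($2\le k\le n$) and $w_k=s_k s_{k-1}\cdots s_2 s_1 s_{1'} s_2\cdots s_k$ ($1\le k\le n-1$). Every element of $D_n$ has a unique expression of the stated form. *)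

From mathcomp Require Import all_boot all_fingroup.
Set Implicit Arguments. Unset Strict Implicit. Unset Printing Implicit Defensive.
Local Open Scope group_scope.

(* S_n with n = m.+2 (so n >= 2); points 1..n are encoded by ordinals 0..n-1.
   Coxeter generator s_i = (i, i+1), 1 <= i <= n-1. *)
Definition sS (m i : nat) : 'S_(m.+2) := tperm (inord i.-1) (inord i).

Definition tS (m k : nat) : 'S_(m.+2) := \prod_(1 <= i < k) sS m i.

Section Dn.
Variables (gT : finGroupType) (s1' : gT) (s : nat -> gT).

Definition tD (k : nat) : gT := \prod_(1 <= i < k) s i.

Definition wD (k : nat) : gT :=
  (\prod_(i <- rev (iota 1 k)) s i) * s1' * \prod_(2 <= i < k.+1) s i.

Definition Dn_relations (m : nat) : Prop :=
  s1' ^+ 2 = 1 /\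
  (forall i, (1 <= i <= m.+1)%N -> s i ^+ 2 = 1) /\
  (forall i, (1 <= i)%N -> (i.+1 <= m.+1)%N -> (s i * s i.+1) ^+ 3 = 1) /\
  (forall i j, (1 <= i)%N -> (j <= m.+1)%N -> (i.+2 <= j)%N ->
      (s i * s j) ^+ 2 = 1) /\
  ((2 <= m.+1)%N -> (s1' * s 2) ^+ 3 = 1) /\
  (forall i, (1 <= i <= m.+1)%N -> i != 2 -> (s1' * s i) ^+ 2 = 1).

Definition normal_word (m : nat) (ie je : nat -> nat) : gT :=
  \prod_(1 <= k < m.+2) (wD k ^+ je k * tD k.+1 ^+ ie k.+1).

End Dn.

From mathcomp Require Import all_boot all_fingroup zify.
Set Implicit Arguments.
Unset Strict Implicit.
Unset Printing Implicit Defensive.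

Local Open Scope group_scope.

(** [Phi] maps [t_k] to the [t_k] of [S_n] factor by factor, and it kills
    every [w_k]: since [Phi s_{1'} = Phi s_1], the image of [w_k] is the
    palindrome [s_k ... s_2 s_1 s_1 s_2 ... s_k] of involutions of [S_n], which
    collapses to [1] from the middle outwards. *)

Lemma morph_prod_seq (aT rT : finGroupType) (D : {group aT})
    (f : {morphism D >-> rT}) (I : eqType) (r : seq I) (F : I -> aT) :
  {in r, forall i, F i \in D} ->
  f (\prod_(i <- r) F i) = \prod_(i <- r) f (F i).
Proof. by move=> DF; rewrite big_seq [RHS]big_seq; apply: morph_prod. Qed.

Section Involutions.

Variables (gT : finGroupType) (F : nat -> gT).
Hypothesis FF : forall i, F i * F i = 1.

Lemma prod_rev_mul_prod r : (\prod_(i <- rev r) F i) * \prod_(i <- r) F i = 1.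
Proof.
elim: r => [|x r IHr]; first by rewrite !big_nil mulg1.
by rewrite rev_cons -cats1 big_cat big_seq1 big_cons -mulgA (mulgA (F x)) FF mul1g.
Qed.

Lemma prod_palindrome k : 0 < k ->
  (\prod_(i <- rev (iota 1 k)) F i) * F 1 * \prod_(2 <= i < k.+1) F i = 1.
Proof.
case: k => // k _; rewrite -[iota 1 k.+1]/(1%N :: iota 2 k) rev_cons -cats1.
rewrite big_cat big_seq1 -!mulgA (mulgA (F 1)) FF mul1g /index_iota !subSS subn0.
exact: prod_rev_mul_prod.
Qed.

End Involutions.

Lemma sS_mul_id m i : sS m i * sS m i = 1.
Proof. exact: tperm2. Qed.

Section GeneratorImages.

Variables (m : nat) (gT : finGroupType) (D : {group gT}).
Variables (s : nat -> gT) (Phi : {morphism D >-> {perm 'I_m.+2}}).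

Hypothesis D_s : forall i, 0 < i <= m.+1 -> s i \in D.
Hypothesis Phi_s : forall i, 0 < i <= m.+1 -> Phi (s i) = sS m i.

Lemma index_iota_gen_range a b : 0 < a -> b <= m.+2 ->
  {in index_iota a b, forall i, 0 < i <= m.+1}.
Proof. by move=> a_gt0 bm i; rewrite mem_index_iota; lia. Qed.

Lemma rev_iota_gen_range k : k <= m.+1 ->
  {in rev (iota 1 k), forall i, 0 < i <= m.+1}.
Proof. by move=> km i; rewrite mem_rev mem_iota; lia. Qed.

Lemma group_prod_s r : {in r, forall i, 0 < i <= m.+1} ->
  \prod_(i <- r) s i \in D.
Proof. by move=> r_gen; rewrite big_seq group_prod // => i /r_gen/D_s. Qed.

Lemma morph_prod_s r : {in r, forall i, 0 < i <= m.+1} ->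
  Phi (\prod_(i <- r) s i) = \prod_(i <- r) sS m i.
Proof.
move=> r_gen; rewrite morph_prod_seq => [|i /r_gen/D_s //].
by rewrite !big_seq; apply: eq_bigr => i /r_gen/Phi_s.
Qed.

Lemma group_tD k : k <= m.+2 -> tD s k \in D.
Proof. by move=> km; apply/group_prod_s/index_iota_gen_range. Qed.

Lemma morph_tD k : k <= m.+2 -> Phi (tD s k) = tS m k.
Proof. by move=> km; apply/morph_prod_s/index_iota_gen_range. Qed.

Variable s1' : gT.
Hypothesis D_s1' : s1' \in D.
Hypothesis Phi_s1' : Phi s1' = sS m 1.

Lemma group_wD k : k <= m.+1 -> wD s1' s k \in D.
Proof.
move=> km; rewrite /wD !groupM // group_prod_s //.
  exact: rev_iota_gen_range.
exact: index_iota_gen_range.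
Qed.

Lemma morph_wD k : 0 < k <= m.+1 -> Phi (wD s1' s k) = 1.
Proof.
case/andP=> k_gt0 km; have genl := rev_iota_gen_range km.
have genr : {in index_iota 2 k.+1, forall i, 0 < i <= m.+1}.
  exact: index_iota_gen_range.
rewrite /wD !morphM ?groupM ?group_prod_s // Phi_s1' !morph_prod_s //.
exact (prod_palindrome (sS_mul_id m) k_gt0).
Qed.

End GeneratorImages.

Theorem mainTheorem4 (m : nat) (gT : finGroupType) (D : {group gT})
  (s1' : gT) (s : nat -> gT)
  (hgen : D :=: <<[set s1'] :|: [set s (val i).+1 | i : 'I_m.+1]>>)
  (hrel : Dn_relations s1' s m)
  (Phi : {morphism D >-> {perm 'I_m.+2}})
  (hPhi1' : Phi s1' = sS m 1)
  (hPhi : forall i, 1 <= i <= m.+1 -> Phi (s i) = sS m i)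
  (ie je : nat -> nat)
  (hie : forall k, 2 <= k <= m.+2 -> ie k <= k.-1)
  (hje : forall k, 1 <= k <= m.+1 -> je k <= 1) :
  Phi (normal_word s1' s m ie je) = \prod_(2 <= k < m.+3) tS m k ^+ ie k.
Proof.
have D_s1' : s1' \in D by rewrite hgen mem_gen // setU11.
have D_s i : 0 < i <= m.+1 -> s i \in D.
  case: i => // i im; rewrite hgen mem_gen // inE; apply/orP; right.
  by apply/imsetP; exists (Ordinal im).
have D_w := group_wD D_s D_s1'.
have D_t := group_tD D_s.
rewrite /normal_word morph_prod_seq => [|k]; last first.
  by rewrite mem_index_iota => kgen; rewrite groupM ?groupX ?D_w ?D_t //; lia.
rewrite (big_add1 _ _ 1) !big_seq; apply: eq_bigr => k.
rewrite mem_index_iota => kgen; have km : k <= m.+1 by lia.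
rewrite morphM ?groupX ?D_w ?D_t // !morphX ?D_w ?D_t //.
by rewrite (morph_wD D_s hPhi D_s1' hPhi1') ?(morph_tD D_s hPhi) ?expg1n ?mul1g ?kgen.
Qed.
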